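(* Let $\mathcal{R}$ be a finite valuation ring with residue field of cardinality $q$ and with uniformizer of nilpotency degree $r$ (so $|\mathcal{R}|=q^r$), and let $\mathcal{R}^*$ denote its group of units. Let $g\colon\mathcal{R}^*\to\mathcal{R}^*$ be a function and let $K\ge1$ be such that $\mu(\psi)\le K$, where $\psi\colon\mathcal{R}^*\to\mathcal{R}$, $\psi(x)=g(x)^2x$. Let $f(x,y)=xy(g(x)+y)$. Then there is a constant $c>0$ depending only on $r$ and $K$ such that for all $A,B,C\subset\mathcal{R}^*$, \[|f(A,B)|\,|B\cdot C|\ \ge\ c\min\left\{q^r|B|,\ \frac{|A||B|^2|C|}{q^{2r-1}}\right\}.\]
   Context: A finite valuation ring is a finite commutative ring with identity that is local (has a unique maximal ideal) and principal (every ideal is principal); its maximal ideal is generated by a non-unit $z$ (a uniformizer), the residue field $\mathcal{R}/(z)$ has $q$ elements, and $r$ is the least integer with $z^r=0$. For a function $\varphi\colon\mathcal{R}^*\to\mathcal{R}$, $\mu(\varphi)=\max_{t\in\mathcal{R}}|\{x\in\mathcal{R}^*:\varphi(x)=t\}|$. Notation: $f(A,B)=\{f(x,y):x\in A,y\in B\}$, $B\cdot C=\{bc:b\in B,c\in C\}$. *)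

From HB Require Import structures.
From mathcomp Require Import all_boot all_order all_algebra.
Set Implicit Arguments. Unset Strict Implicit. Unset Printing Implicit Defensive.
Import Order.TTheory GRing.Theory Num.Theory.
Local Open Scope ring_scope.

Section FVR.
Variable R : finComUnitRingType.

Definition is_ideal (I : {set R}) : bool :=
  [&& 0 \in I,
      [forall x in I, forall y in I, x + y \in I] &
      [forall a : R, forall x in I, a * x \in I]].

Definition is_maximal_ideal (I : {set R}) : Prop :=
  [/\ is_ideal I, I != setT &
      forall J : {set R}, is_ideal J -> I \subset J -> J = I \/ J = setT].

Definition pideal (a : R) : {set R} := [set a * x | x : R].

Definition is_local : Prop :=
  exists I, is_maximal_ideal I /\ forall J, is_maximal_ideal J -> J = I.

Definition is_principal : Prop :=
  forall I, is_ideal I -> exists a : R, I = pideal a.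

(* R is a finite valuation ring (finite comm. ring, local, principal) and
   z is a uniformizer: z generates the maximal ideal. *)
Definition fvr_uniformizer (z : R) : Prop :=
  [/\ is_local, is_principal & is_maximal_ideal (pideal z)].

Definition residue_card (z : R) : nat :=
  #|[set [set y : R | x - y \in pideal z] | x : R]|.

Definition nilp_degree (z : R) (r : nat) : Prop :=
  z ^+ r = 0 /\ forall k, (k < r)%N -> z ^+ k != 0.

Definition mu (phi : R -> R) : nat :=
  \max_(t : R) #|[set x : R | (x \is a GRing.unit) && (phi x == t)]|.

Definition img2 (h : R -> R -> R) (A B : {set R}) : {set R} :=
  [set h x y | x in A, y in B].

Definition setmul (B C : {set R}) : {set R} := [set b * c | b in B, c in C].

End FVR.

From HB Require Import structures.
From mathcomp Require Import all_boot all_order all_algebra.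
From mathcomp Require Import ring lra.
Set Implicit Arguments. Unset Strict Implicit. Unset Printing Implicit Defensive.
Import Order.TTheory GRing.Theory Num.Theory.
Local Open Scope ring_scope.

(* Let P = {(s, t/s) : s in B.C, t in f(A,B)} and attach to (a, c) in A x C
   the line y = a g(a)/c + (a/c^2) x.  For every b in B the point
   (bc, f(a,b)/(bc)) lies on it, so these |A||C| lines carry at least
   |A||B||C| incidences with P; as intercept^2/slope = g(a)^2 a = psi(a), and
   a then determines c, each line comes from at most K pairs.  Two points whose
   abscissae differ by a unit span at most one line, and all other points of a
   line through p have abscissa in p.1 + (z), so the second moment of the number
   n_l of points on a line satisfies sum_l (n_l - |P|/|R|)^2 <= |P||R||(z)|.
   By Cauchy-Schwarz the incidence count deviates from its mean |P||A||C|/|R|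
   by at most sqrt(|A||C| K |P||R||(z)|): either the mean is at least half of
   |A||B||C|, so |P| >= q^r |B|/2, or the deviation is, so
   |P| >= |A||B|^2|C| / (4 K q^(2r-1)), using |R| = q^r and
   |R||(z)| = q^(2r-1).  Finally |P| <= |f(A,B)||B.C|. *)

Lemma card_uniform_fibres (T U : finType) (h : T -> U) (S : {set T}) (m : nat) :
  (forall x, x \in S -> #|[set y in S | h y == h x]| = m) ->
  #|S| = (#|h @: S| * m)%N.
Proof.
move=> fibre_m; rewrite -sum1_card (partition_big_imset h) /= -sum_nat_const.
apply: eq_bigr => _ /imsetP [x xS ->].
by rewrite sum1dep_card -(fibre_m x xS); apply: eq_card => y; rewrite inE.
Qed.

Lemma card_translate (V : finZmodType) (S : {set V}) (x0 : V) :
  #|[set y | y - x0 \in S]| = #|S|.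
Proof.
rewrite -(card_imset (mem S) (addIr x0)); apply: eq_card => y; rewrite inE.
apply/idP/imsetP => [yS|[w wS ->]]; last by rewrite addrK.
by exists (y - x0); rewrite ?subrK.
Qed.

Lemma card_pred_sum_in (T : finType) (X : {set T}) (Q : pred T) :
  #|[set p in X | Q p]| = (\sum_(p in X) Q p)%N.
Proof. by rewrite -sum1dep_card big_mkcondr; apply: eq_bigr => p _; case: (Q p). Qed.

Lemma card_pred_sum (T : finType) (Q : pred T) :
  #|[set p | Q p]| = (\sum_p Q p)%N.
Proof. by rewrite -sum1dep_card big_mkcond; apply: eq_bigr => p _; case: (Q p). Qed.

Lemma imsetTE (T U : finType) (h : T -> U) : [set h x | x : T] = h @: [set: T].
Proof. by apply/setP => u; apply/imsetP/imsetP => -[x _ ->]; exists x. Qed.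

Section Ideals.
Variable R : finComUnitRingType.
Implicit Types a x y : R.

Definition ann a : {set R} := [set x | a * x == 0].

Lemma pidealP a x : reflect (exists y, x = a * y) (x \in pideal a).
Proof. by apply: (iffP imsetP) => [[y _ ->]|[y ->]]; exists y. Qed.

Lemma mem_pideal a x : a * x \in pideal a.
Proof. by apply/pidealP; exists x. Qed.

Lemma pideal_refl a : a \in pideal a.
Proof. by have := mem_pideal a 1; rewrite mulr1. Qed.

Lemma pideal_mem0 a : 0 \in pideal a.
Proof. by rewrite -(mulr0 a) mem_pideal. Qed.

Lemma pidealD a x y : x \in pideal a -> y \in pideal a -> x + y \in pideal a.
Proof. by move=> /pidealP[u ->] /pidealP[v ->]; rewrite -mulrDr mem_pideal. Qed.

Lemma pidealN a x : x \in pideal a -> - x \in pideal a.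
Proof. by move=> /pidealP[u ->]; rewrite -mulrN mem_pideal. Qed.

Lemma pidealB a x y : x \in pideal a -> y \in pideal a -> x - y \in pideal a.
Proof. by move=> xI /pidealN; apply: pidealD. Qed.

Lemma pidealMl a b x : x \in pideal a -> b * x \in pideal a.
Proof. by move=> /pidealP[u ->]; rewrite mulrCA mem_pideal. Qed.

Lemma pideal_is_ideal a : is_ideal (pideal a).
Proof.
apply/and3P; split; first exact: pideal_mem0.
  by apply/forallP => x; apply/implyP => xI; apply/forallP => y; apply/implyP; apply: pidealD.
by apply/forallP => b; apply/forallP => x; apply/implyP; apply: pidealMl.
Qed.

Lemma pideal0 : pideal 0 = [set 0 : R].
Proof.
apply/setP => x; rewrite inE.
by apply/pidealP/eqP => [[y ->]|->]; [rewrite mul0r | exists 0; rewrite mul0r].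
Qed.

Lemma pideal1 : pideal 1 = [set: R].
Proof. by apply/setP => x; rewrite inE; apply/pidealP; exists x; rewrite mul1r. Qed.

Lemma card_residue a : #|[set: R]| = (residue_card a * #|pideal a|)%N.
Proof.
rewrite /residue_card imsetTE.
apply: card_uniform_fibres => x0 _.
rewrite -(card_translate (pideal a) x0); apply: eq_card => y; rewrite !inE.
apply/eqP/idP => [coset_eq | x0y].
  have : y \in [set w | y - w \in pideal a] by rewrite inE subrr pideal_mem0.
  by rewrite coset_eq inE => /pidealN; rewrite opprB.
apply/setP => w; rewrite !inE; apply/idP/idP => yw.
  have -> : x0 - w = (y - w) - (y - x0) by ring.
  exact: pidealB.
have -> : y - w = (x0 - w) + (y - x0) by ring.
exact: pidealD.
Qed.

Lemma card_pideal_ann a : (#|pideal a| * #|ann a|)%N = #|[set: R]|.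
Proof.
rewrite /pideal imsetTE.
apply/esym/card_uniform_fibres => x0 _.
rewrite -(card_translate (ann a) x0); apply: eq_card => y; rewrite !inE.
by rewrite mulrBr subr_eq0.
Qed.

End Ideals.

Section Uniformizer.
Variable R : finComUnitRingType.
Variable z : R.
Hypothesis z_unif : fvr_uniformizer z.

Lemma nonunit_pideal (x : R) : x \isn't a GRing.unit -> x \in pideal z.
Proof.
move=> nUx.
pose proper_over_x (J : {set R}) := [&& is_ideal J, J != setT & pideal x \subset J].
have x_proper : proper_over_x (pideal x).
  rewrite /proper_over_x pideal_is_ideal subxx andbT /=.
  apply: contra nUx => /eqP pidealx_T; apply/unitrPr.
  have /pidealP[y one_xy] : 1 \in pideal x by rewrite pidealx_T inE.
  by exists y.
case: (arg_maxnP (fun J : {set R} => #|J|) x_proper) => J /and3P[J_ideal J_proper xJ] J_max.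
have J_maximal : is_maximal_ideal J.
  split=> // J' J'_ideal JJ'; have [->|J'_proper] := eqVneq J' setT; first by right.
  left; apply/eqP; rewrite eq_sym eqEcard JJ' /=; apply: J_max.
  by rewrite /proper_over_x J'_ideal J'_proper (subset_trans xJ JJ').
case: z_unif => -[I [_ I_unique]] _ z_maximal.
rewrite (I_unique _ z_maximal) -(I_unique _ J_maximal).
exact: subsetP xJ _ (pideal_refl x).
Qed.

Variable r : nat.
Hypothesis z_nilp : nilp_degree z r.

Lemma nilp_degree_gt0 : (0 < r)%N.
Proof. by case: z_nilp; case: r => // /eqP; rewrite expr0 oner_eq0. Qed.

Lemma ann_exp_sub k : (k < r)%N -> ann (z ^+ k) \subset pideal z.
Proof.
move=> kr; apply/subsetP => x; rewrite inE => /eqP zkx0; apply: nonunit_pideal.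
have := proj2 z_nilp k kr; apply: contraNN => Ux.
by rewrite -(mulrK Ux (z ^+ k)) zkx0 mul0r.
Qed.

Lemma card_pideal_expS_ann k : (k < r)%N ->
  (#|pideal (z ^+ k.+1)| * #|ann (z ^+ k)|)%N = #|pideal z|.
Proof.
move=> kr.
have -> : pideal (z ^+ k.+1) = (fun x => z ^+ k * x) @: pideal z.
  apply/setP => s; apply/imsetP/imsetP => [[x _ ->]|[_ /pidealP[u ->] ->]].
    by exists (z * x); rewrite ?mem_pideal // mulrA -exprSr.
  by exists u; rewrite // mulrA -exprSr.
apply/esym/card_uniform_fibres => x0 x0z.
rewrite -(card_translate (ann (z ^+ k)) x0); apply: eq_card => y; rewrite !inE.
rewrite mulrBr subr_eq0 andb_idl // => /eqP zk_eq.
rewrite -(subrK x0 y) pidealD //; apply: (subsetP (ann_exp_sub kr)).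
by rewrite inE mulrBr zk_eq subrr.
Qed.

Lemma card_pideal_exp k : (k < r)%N ->
  #|pideal (z ^+ k)| = (residue_card z * #|pideal (z ^+ k.+1)|)%N.
Proof.
move=> kr; have ann_gt0 : (0 < #|ann (z ^+ k)|)%N.
  by apply/card_gt0P; exists 0; rewrite inE mulr0.
apply/eqP; rewrite -(eqn_pmul2r ann_gt0) -mulnA card_pideal_expS_ann //.
by rewrite card_pideal_ann (card_residue z).
Qed.

Lemma card_pideal_exp_subn j : (j <= r)%N ->
  #|pideal (z ^+ (r - j))| = (residue_card z ^ j)%N.
Proof.
elim: j => [_|j IHj jr]; first by rewrite subn0 (proj1 z_nilp) pideal0 cards1.
rewrite card_pideal_exp; last by rewrite ltn_subrL nilp_degree_gt0.
by rewrite subnSK // IHj ?expnS // ltnW.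
Qed.

Lemma card_fvr : #|[set: R]| = (residue_card z ^ r)%N.
Proof. by rewrite -card_pideal_exp_subn // subnn expr0 pideal1. Qed.

Lemma card_fvr_mul_pideal :
  (#|[set: R]| * #|pideal z|)%N = (residue_card z ^ (2 * r - 1))%N.
Proof.
have q_gt0 : (0 < residue_card z)%N.
  have : (0 < #|[set: R]|)%N by apply/card_gt0P; exists 0.
  by rewrite (card_residue z) muln_gt0 => /andP[].
apply/eqP; rewrite -(eqn_pmul2l q_gt0) mulnCA -card_residue -expnS.
have r_gt0 := nilp_degree_gt0.
by rewrite card_fvr -expnD addnn -mul2n subn1 prednK // muln_gt0.
Qed.

End Uniformizer.

Section RealInequalities.
Variable F : realFieldType.

Lemma sqr_sum_le_card_sum_sqr (I : finType) (D : {pred I}) (x : I -> F) :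
  (\sum_(i in D) x i) ^+ 2 <= #|D|%:R * \sum_(i in D) x i ^+ 2.
Proof.
have [D0|D_gt0] := posnP #|D|.
  by rewrite D0 mul0r big_pred0 ?expr0n // => i; rewrite (card0_eq D0).
set s := \sum_(i in D) x i; set t := \sum_(i in D) x i ^+ 2; set k : F := #|D|%:R.
have : 0 <= \sum_(i in D) (k * x i - s) ^+ 2 by rewrite sumr_ge0 // => i _; rewrite sqr_ge0.
have -> : \sum_(i in D) (k * x i - s) ^+ 2 = k * (k * t - s ^+ 2).
  rewrite (eq_bigr (fun i => k ^+ 2 * x i ^+ 2 - 2 * k * s * x i + s ^+ 2)); last by move=> i _; ring.
  have sum_t : \sum_(i in D) k ^+ 2 * x i ^+ 2 = k ^+ 2 * t by rewrite -mulr_sumr.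
  have sum_s : \sum_(i in D) 2 * k * s * x i = 2 * k * s * s by rewrite -mulr_sumr.
  have sum_const : \sum_(i in D) s ^+ 2 = s ^+ 2 * k by rewrite sumr_const mulr_natr.
  by rewrite big_split sumrB /= sum_t sum_s sum_const; ring.
by rewrite pmulr_rge0 ?ltr0n // subr_ge0.
Qed.

Lemma sum_comp_le_fibre_bound (T U : finType) (phi : T -> U) (X : {set T}) (K : nat)
    (h : U -> F) :
  (forall u, #|[set x in X | phi x == u]| <= K)%N -> (forall u, 0 <= h u) ->
  \sum_(x in X) h (phi x) <= K%:R * \sum_u h u.
Proof.
move=> fibre_le h_ge0; rewrite (partition_big phi predT) //= mulr_sumr.
apply: ler_sum => u _; rewrite (eq_bigr (fun=> h u)) => [|x /andP[_ /eqP ->]] //.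
rewrite sumr_const -[h u *+ _]mulr_natr mulrC; apply: ler_wpM2r => //.
by rewrite ler_nat; apply: leq_trans (fibre_le u); rewrite cardsE.
Qed.

Lemma min_le_of_sum_deviation (a b c p Q E K N : F) :
  0 < Q -> 0 < E -> 1 <= K -> 0 <= a -> 0 <= b -> 0 <= c -> 0 <= p ->
  a * b * c <= N -> (N - p / Q * (a * c)) ^+ 2 <= a * c * K * p * E ->
  (4 * K)^-1 * Num.min (Q * b) (a * b ^+ 2 * c / E) <= p.
Proof.
move=> Q_gt0 E_gt0 K_ge1 a_ge0 b_ge0 c_ge0 p_ge0 N_ge dev_le.
rewrite mulrC ler_pdivrMr; last by lra.
have [ac0|ac_neq0] := eqVneq (a * c) 0.
  rewrite ge_min (_ : a * b ^+ 2 * c = a * c * b ^+ 2); last by ring.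
  by rewrite ac0 !mul0r orbC mulr_ge0 //; lra.
have ac_gt0 : 0 < a * c by rewrite lt_def ac_neq0 mulr_ge0.
set u := p / Q in dev_le *.
have pE : p = u * Q by rewrite /u mulfVK // gt_eqF.
have u_ge0 : 0 <= u by rewrite divr_ge0 // ltW.
have abc_ge0 : 0 <= a * b * c by rewrite !mulr_ge0.
rewrite ge_min; apply/orP.
have [mean_large|mean_small] := lerP (a * b * c / 2) (u * (a * c)).
  left; have : a * c * (b / 2) <= a * c * u.
    have -> : a * c * (b / 2) = a * b * c / 2 by ring.
    by rewrite [a * c * u]mulrC.
  rewrite ler_pM2l // pE => b_le; nra.
right; rewrite ler_pdivrMr //.
have sqr_le : (a * b * c / 2) ^+ 2 <= a * c * K * p * E.
  by apply: le_trans dev_le; rewrite ler_sqr ?nnegrE; lra.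
have : a * c * (a * b ^+ 2 * c) <= a * c * (p * (4 * K) * E) by nra.
by rewrite ler_pM2l.
Qed.

End RealInequalities.

Section Incidences.
Variable R : finComUnitRingType.
Variable M : {set R}.
Hypothesis nonunit_M : forall x : R, x \isn't a GRing.unit -> x \in M.
Variable P : {set R * R}.
Implicit Types p l : R * R.

Definition on_line p l := p.2 == l.1 + l.2 * p.1.

Definition line_count l := #|[set p in P | on_line p l]|.

Lemma card_lines_through p : #|[set l | on_line p l]| = #|[set: R]|.
Proof.
have -> : [set l | on_line p l] = (fun s => (p.2 - s * p.1, s)) @: [set: R].
  apply/setP => l; rewrite inE /on_line; apply/eqP/imsetP => [->|[s _ ->]] /=.
    by exists l.2; rewrite // addrK -surjective_pairing.
  by rewrite subrK.
by apply: card_imset => s1 s2 [].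
Qed.

Lemma sum_line_count : (\sum_l line_count l = #|P| * #|[set: R]|)%N.
Proof.
rewrite /line_count; under eq_bigr do rewrite card_pred_sum_in.
rewrite exchange_big /= -sum_nat_const; apply: eq_bigr => p _.
by rewrite -card_pred_sum card_lines_through.
Qed.

Lemma card_lines_through2_le p p' : p'.1 - p.1 \is a GRing.unit ->
  (#|[set l | on_line p l && on_line p' l]| <= 1)%N.
Proof.
move=> Ud; apply/card_le1_eqP => l l'; rewrite !inE /on_line.
move=> /andP[/eqP pl /eqP p'l] /andP[/eqP pl' /eqP p'l'].
have slope_eq : l.2 = l'.2.
  apply: (mulIr Ud); rewrite (_ : l.2 * _ = p'.2 - p.2); last by rewrite pl p'l; ring.
  by rewrite pl' p'l'; ring.
have intercept_eq : l.1 = l'.1 by move: pl; rewrite pl' slope_eq => /addIr.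
by rewrite [l]surjective_pairing [l']surjective_pairing slope_eq intercept_eq.
Qed.

Lemma card_on_line_nonunit_le p l :
  (#|[set p' | on_line p' l && ((p'.1 - p.1)%R \isn't a GRing.unit)]| <= #|M|)%N.
Proof.
apply: leq_trans (leq_imset_card (fun d => (p.1 + d, l.1 + l.2 * (p.1 + d))) M).
apply/subset_leq_card/subsetP => p'; rewrite inE /on_line => /andP[/eqP p'l nUd].
apply/imsetP; exists (p'.1 - p.1); first exact: nonunit_M.
by rewrite addrC subrK -p'l -surjective_pairing.
Qed.

Lemma sum_incident_line_count_le p :
  (\sum_l on_line p l * line_count l <= #|P| + #|[set: R]| * #|M|)%N.
Proof.
pose U p' := p'.1 - p.1 \is a GRing.unit.
have line_count_split l : line_count l =
    (#|[set p' in P | on_line p' l && U p']| + #|[set p' in P | on_line p' l && ~~ U p']|)%N.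
  rewrite /line_count !card_pred_sum_in -big_split /=; apply: eq_bigr => p' _.
  by case: (on_line p' l); case: (U p').
under eq_bigr do rewrite line_count_split mulnDr.
rewrite big_split /=; apply: leq_add.
  under eq_bigr do rewrite card_pred_sum_in big_distrr /=.
  rewrite exchange_big /= -sum1_card; apply: leq_sum => p' _.
  case Up' : (U p'); last by rewrite big1 // => l _; rewrite !andbF !muln0.
  apply: leq_trans (card_lines_through2_le Up'); rewrite card_pred_sum.
  by apply: leq_sum => l _; case: (on_line p l); case: (on_line p' l).
apply: (@leq_trans (\sum_l on_line p l * #|M|)).
  apply: leq_sum => l _; apply: leq_mul => //.
  apply: leq_trans (card_on_line_nonunit_le p l); apply: subset_leq_card.
  by apply/subsetP => p'; rewrite !inE => /andP[_ ->].
by rewrite -big_distrl /= -card_pred_sum card_lines_through.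
Qed.

Lemma sum_line_count_sqr_le :
  (\sum_l line_count l ^ 2 <= #|P| * (#|P| + #|[set: R]| * #|M|))%N.
Proof.
have -> : (\sum_l line_count l ^ 2 = \sum_(p in P) \sum_l on_line p l * line_count l)%N.
  rewrite exchange_big /=; apply: eq_bigr => l _.
  by rewrite -big_distrl /= -card_pred_sum_in expnS expn1.
by rewrite -sum_nat_const; apply: leq_sum => p _; apply: sum_incident_line_count_le.
Qed.

Lemma line_count_variance_le (F : realFieldType) :
  \sum_l ((line_count l)%:R - #|P|%:R / #|[set: R]|%:R) ^+ 2
    <= (#|P| * (#|[set: R]| * #|M|))%N%:R :> F.
Proof.
set Q : F := #|[set: R]|%:R; set m : F := #|P|%:R / Q.
have Q_neq0 : Q != 0 by rewrite pnatr_eq0 -lt0n; apply/card_gt0P; exists 0; rewrite inE.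
rewrite (eq_bigr (fun l => ((line_count l) ^ 2)%N%:R - 2 * m * (line_count l)%:R + m ^+ 2));
  last by move=> l _; rewrite natrX; ring.
have sum_sqr : \sum_l ((line_count l ^ 2)%N)%:R = (\sum_l line_count l ^ 2)%N%:R :> F.
  by rewrite natr_sum.
have sum_lin : \sum_l 2 * m * (line_count l)%:R = 2 * m * (#|P| * #|[set: R]|)%N%:R.
  by rewrite -mulr_sumr -natr_sum sum_line_count.
have sum_const : \sum_(l : R * R) m ^+ 2 = m ^+ 2 * (#|[set: R]| * #|[set: R]|)%N%:R.
  by rewrite sumr_const card_prod cardsT mulr_natr.
rewrite big_split sumrB /= sum_sqr sum_lin sum_const.
have -> : m ^+ 2 * (#|[set: R]| * #|[set: R]|)%N%:R = #|P|%:R ^+ 2.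
  by rewrite natrM -/Q /m; field.
have -> : 2 * m * (#|P| * #|[set: R]|)%N%:R = 2 * #|P|%:R ^+ 2.
  by rewrite natrM -/Q /m; field.
have := sum_line_count_sqr_le; rewrite -(ler_nat F) !(natrD, natrM); lra.
Qed.

End Incidences.

Lemma card_fibre_le_mu (R : finComUnitRingType) (phi : R -> R) t :
  (#|[set x | (x \is a GRing.unit) && (phi x == t)]| <= mu phi)%N.
Proof. exact: (@leq_bigmax _ (fun s => #|[set x | (x \is a GRing.unit) && (phi x == s)]|) t). Qed.

Section Expander.
Variable R : finComUnitRingType.
Variable g : R -> R.
Variable K : nat.
Hypothesis g_unit : forall x : R, x \is a GRing.unit -> g x \is a GRing.unit.
Hypothesis mu_le : (mu (fun x => (g x ^+ 2 * x)%R) <= K)%N.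
Variables A B C : {set R}.
Hypothesis A_unit : {subset A <= [pred x | x \is a GRing.unit]}.
Hypothesis B_unit : {subset B <= [pred x | x \is a GRing.unit]}.
Hypothesis C_unit : {subset C <= [pred x | x \is a GRing.unit]}.

Let f x y := x * y * (g x + y).

Definition expander_points : {set R * R} :=
  [set (s, t / s) | s in setmul B C, t in img2 f A B].

Definition line_of (ac : R * R) : R * R := (ac.1 * g ac.1 / ac.2, ac.1 / ac.2 ^+ 2).

Local Notation P := expander_points.

Lemma card_expander_points_le : (#|P| <= #|img2 f A B| * #|setmul B C|)%N.
Proof.
rewrite /P curry_imset2X; apply: leq_trans (leq_imset_card _ _) _.
by rewrite cardsX mulnC.
Qed.

Lemma card_le_line_count_line_of a c : a \in A -> c \in C ->
  (#|B| <= line_count P (line_of (a, c)))%N.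
Proof.
move=> aA cC; have Ua := A_unit aA; have Uc := C_unit cC.
rewrite /line_count -(@card_in_imset _ _ (fun b => (b * c, f a b / (b * c))) B).
  apply/subset_leq_card/subsetP => _ /imsetP[b bB ->]; have Ub := B_unit bB.
  rewrite inE; apply/andP; split.
    by apply/imset2P; exists (b * c) (f a b) => //; apply/imset2P; [exists b c | exists a b].
  rewrite /on_line /= /f invrM // -exprVn.
  have -> : a * b * (g a + b) * (c^-1 / b) = a * (g a + b) * c^-1 * (b / b) by ring.
  have -> : a * g a / c + a * c^-1 ^+ 2 * (b * c) = a * g a * c^-1 + a * b * c^-1 * (c / c) by ring.
  by rewrite !divrr // !mulr1; apply/eqP; ring.
by move=> b1 b2 _ _ [/(mulIr Uc)].
Qed.

Lemma line_of_sqr a c : a \is a GRing.unit -> c \is a GRing.unit ->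
  (line_of (a, c)).1 ^+ 2 = g a ^+ 2 * a * (line_of (a, c)).2.
Proof. by move=> Ua Uc; rewrite /line_of /= -exprVn; ring. Qed.

Lemma card_line_of_fibre_le l : (#|[set ac in setX A C | line_of ac == l]| <= K)%N.
Proof.
set W := [set ac in setX A C | line_of ac == l].
have [->|[ac0 ac0W]] := set_0Vmem W; first by rewrite cards0.
have memW ac : ac \in W ->
    [/\ ac.1 \is a GRing.unit, ac.2 \is a GRing.unit & line_of ac = l].
  by rewrite !inE => /andP[/andP[aA cC] /eqP]; split; [apply: A_unit | apply: C_unit |].
apply: leq_trans mu_le; apply: leq_trans (card_fibre_le_mu _ (g ac0.1 ^+ 2 * ac0.1)).
rewrite -(@card_in_imset _ _ fst W).
  apply/subset_leq_card/subsetP => _ /imsetP[ac acW ->].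
  have [Ua Uc lac] := memW ac acW; have [Ua0 Uc0 lac0] := memW ac0 ac0W.
  rewrite inE Ua /=; apply/eqP.
  have := line_of_sqr Ua Uc; have := line_of_sqr Ua0 Uc0.
  rewrite -!surjective_pairing lac lac0 => -> l2_eq.
  have Ul2 : l.2 \is a GRing.unit by rewrite -lac /line_of /= unitrM Ua unitrV unitrX.
  by apply: (mulIr Ul2); rewrite l2_eq.
move=> [a c] [a' c'] acW acW' /= a_eq; subst a'.
have [Ua Uc lac] := memW _ acW; have [_ Uc' lac'] := memW _ acW'.
move: lac; rewrite -lac' /line_of /= => -[slope_eq _].
have Uag : a * g a \is a GRing.unit by rewrite unitrM Ua g_unit.
by move/(mulrI Uag)/invr_inj: slope_eq => ->.
Qed.

Variable F : realFieldType.

Lemma card_mul_le_sum_line_count :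
  (#|A| * #|B| * #|C|)%N%:R <= \sum_(ac in setX A C) (line_count P (line_of ac))%:R :> F.
Proof.
rewrite -natr_sum ler_nat mulnAC -cardsX -sum_nat_const.
by apply: leq_sum => -[a c]; rewrite inE => /andP[aA cC]; apply: card_le_line_count_line_of.
Qed.

Lemma sum_line_count_deviation_le (M : {set R}) :
  (forall x : R, x \isn't a GRing.unit -> x \in M) ->
  (\sum_(ac in setX A C) (line_count P (line_of ac))%:R
      - #|P|%:R / #|[set: R]|%:R * (#|A| * #|C|)%N%:R) ^+ 2
    <= (#|A| * #|C|)%N%:R * K%:R * (#|P| * (#|[set: R]| * #|M|))%N%:R :> F.
Proof.
move=> nonunit_M; set m : F := #|P|%:R / #|[set: R]|%:R.
have -> : \sum_(ac in setX A C) (line_count P (line_of ac))%:R - m * (#|A| * #|C|)%N%:R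
    = \sum_(ac in setX A C) ((line_count P (line_of ac))%:R - m).
  by rewrite sumrB sumr_const cardsX mulr_natr.
apply: (le_trans (sqr_sum_le_card_sum_sqr _ _)).
rewrite cardsX -mulrA ler_wpM2l //.
have sqr_dev_ge0 l : 0 <= ((line_count P l)%:R - m) ^+ 2 by exact: sqr_ge0.
apply: (le_trans (sum_comp_le_fibre_bound card_line_of_fibre_le sqr_dev_ge0)).
by rewrite ler_wpM2l // line_count_variance_le.
Qed.

End Expander.

Theorem theorem1p15 :
  forall (r K : nat), (1 <= K)%N ->
  exists c : rat, 0 < c /\
  forall (R : finComUnitRingType) (z : R) (g : R -> R),
    fvr_uniformizer z ->
    nilp_degree z r ->
    (forall x : R, x \is a GRing.unit -> g x \is a GRing.unit) ->
    (mu (fun x => (g x ^+ 2 * x)%R) <= K)%N ->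
    forall A B C : {set R},
      {subset A <= [pred x | x \is a GRing.unit]} ->
      {subset B <= [pred x | x \is a GRing.unit]} ->
      {subset C <= [pred x | x \is a GRing.unit]} ->
      let q := residue_card z in
      let f := fun x y : R => x * y * (g x + y) in
      c * Num.min ((q ^ r * #|B|)%N%:R)
                  ((#|A| * #|B| ^ 2 * #|C|)%N%:R / (q ^ (2 * r - 1))%N%:R)
        <= (#|img2 f A B| * #|setmul B C|)%N%:R.
Proof.
move=> r K K_ge1; exists (4 * K%:R)^-1; split.
  by rewrite invr_gt0 mulr_gt0 // ltr0n.
move=> R z g z_unif z_nilp g_unit mu_le A B C A_unit B_unit C_unit /=.
set P := expander_points g A B C.
apply: (@le_trans _ _ #|P|%:R); last by rewrite ler_nat card_expander_points_le.
rewrite -(card_fvr z_unif z_nilp) -(card_fvr_mul_pideal z_unif z_nilp) !natrM.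
rewrite -[#|B|%:R * #|B|%:R]expr2.
have N_ge := card_mul_le_sum_line_count g A_unit B_unit C_unit rat.
have dev_le := sum_line_count_deviation_le g_unit mu_le B A_unit C_unit rat (nonunit_pideal z_unif).
rewrite !natrM in N_ge; rewrite !natrM [X in _ <= X]mulrA in dev_le.
apply: (min_le_of_sum_deviation _ _ _ _ _ _ _ N_ge dev_le) => //.
- by rewrite (ltr0n rat); apply/card_gt0P; exists 0.
- by rewrite -natrM (ltr0n rat) muln_gt0; apply/andP; split; apply/card_gt0P; exists 0; rewrite ?pideal_mem0.
by rewrite (ler1n rat).
Qed.
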